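(* Let $T$ be a normal spanning tree of a connected graph $G$ with $n$ vertices and $m$ edges. Then $\mathcal{T}_G=\bigsqcup_{r\in\mathbb{I}^{m-n+1}}\mathcal{A}_T(r)$, where $\bigsqcup$ denotes disjoint union (each $\mathcal{A}_T(r)$ is nonempty and the sets $\mathcal{A}_T(r)$ are pairwise disjoint).
   Context: Graphs are finite, simple and undirected. $\mathbb{T}=\{z\in\mathbb{C}:|z|=1\}$, $\mathbb{I}=[0,2\pi)$. A $\mathbb{T}$-gain on $G$ is a map $\varphi$ from oriented edges to $\mathbb{T}$ with $\varphi(\overrightarrow{e_{ts}})=\varphi(\overrightarrow{e_{st}})^{-1}$; $\mathcal{T}_G$ is the set of all $\mathbb{T}$-gain graphs $(G,\varphi)$ on $G$. The gain of a directed cycle is the product of gains of its oriented edges. A rooted spanning tree $T$ with root $v_r$ induces the tree order ($v_x\le v_y$ iff $v_x$ is on the $T$-path from $v_r$ to $v_y$); $T$ is normal if adjacent vertices of $G$ are always comparable. The suitably oriented graph $\overrightarrow{G_T}$ orients each edge $e_{st}$ with $v_s\le v_t$ as $\overrightarrow{e_{st}}$ if $e_{st}\in E(T)$ and as $\overrightarrow{e_{ts}}$ otherwise; the $m-n+1$ fundamental cycles of $T$ become directed cycles $\overrightarrow{C_j(T)}$ in $\overrightarrow{G_T}$ (in a fixed order). For $r=(c_1,\dots,c_{m-n+1})\in\mathbb{I}^{m-n+1}$, $\mathcal{A}_T(r)=\{(G,\varphi)\in\mathcal{T}_G:\varphi(\overrightarrow{C_j(T)})=e^{ic_j},\ j=1,\dots,m-n+1\}$.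 *)

From HB Require Import structures.
From mathcomp Require Import all_boot all_order all_algebra.
From mathcomp Require Import complex.
From mathcomp Require Import reals trigo.
Set Implicit Arguments.
Unset Strict Implicit.
Unset Printing Implicit Defensive.
Import Order.TTheory GRing.Theory Num.Theory.
Local Open Scope ring_scope.

Section Graphs.
Variable V : finType.

Definition simple_graph (adj : rel V) := symmetric adj /\ irreflexive adj.

Definition connected_graph (adj : rel V) := forall x y : V, connect adj x y.

Definition nverts := #|V|.
Definition edge_set (adj : rel V) : {set {set V}} :=
  [set [set p.1; p.2] | p : V * V & adj p.1 p.2].
Definition nedges (adj : rel V) := #|edge_set adj|.

(** cyclomatic number m - n + 1 (written m + 1 - n to avoid truncation) *)
Definition cyclo_num (adj : rel V) := ((nedges adj).+1 - nverts)%N.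

Definition acyclic (tr : rel V) :=
  forall c : seq V, (2 < size c)%N -> uniq c -> ~~ cycle tr c.

Definition spanning_tree (adj tr : rel V) :=
  [/\ symmetric tr, subrel tr adj, (forall x y : V, connect tr x y) & acyclic tr].

Definition tpath (tr : rel V) (x : V) (p : seq V) (y : V) :=
  [/\ path tr x p, last x p = y & uniq (x :: p)].

Definition tree_le (tr : rel V) (root x y : V) :=
  exists p, tpath tr root p y /\ x \in root :: p.

Definition normal_tree (adj tr : rel V) (root : V) :=
  forall x y, adj x y -> tree_le tr root x y \/ tree_le tr root y x.

(** oriented non-tree edges (s,t) with s <= t; each corresponds to one
    fundamental cycle of T *)
Definition fund_edge (adj tr : rel V) (root : V) (p : V * V) :=
  [/\ adj p.1 p.2, ~~ tr p.1 p.2 & tree_le tr root p.1 p.2].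
End Graphs.

Section Gains.
Variable R : realType.
Variable V : finType.
Local Notation C := R[i].

(** A T-gain graph on G: phi s t is the gain of the oriented edge e_st.
    Maps on oriented edges are represented by total functions normalised
    to 1 on non-adjacent pairs. *)
Definition is_gain (adj : rel V) (phi : V -> V -> C) :=
  (forall s t, adj s t -> `|phi s t| = 1) /\
  (forall s t, adj s t -> phi t s = (phi s t)^-1) /\
  (forall s t, ~~ adj s t -> phi s t = 1).

Definition walk_gain (phi : V -> V -> C) (x : V) (p : seq V) : C :=
  \prod_(e <- zip (x :: p) p) phi e.1 e.2.

(** gain of the directed fundamental cycle of the non-tree edge (s,t),
    s <= t, in the suitably oriented graph: down the tree path from s to t,
    then back along the non-tree edge oriented t -> s. *)
Definition fund_cycle_gain (tr : rel V) (phi : V -> V -> C) (s t : V) (g : C) :=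
  forall p, tpath tr s p t -> walk_gain phi s p * phi t s = g.

Definition expi (c : R) : C := (cos c +i* sin c)%C.

Definition in_I (c : R) := 0 <= c < 2 * pi.

Definition in_A (tr : rel V) (k : nat) (cyc : 'I_k -> V * V)
    (phi : V -> V -> C) (r : {ffun 'I_k -> R}) :=
  forall j : 'I_k, fund_cycle_gain tr phi (cyc j).1 (cyc j).2 (expi (r j)).
End Gains.

From HB Require Import structures.
From mathcomp Require Import all_boot all_order all_algebra.
From mathcomp Require Import complex.
From mathcomp Require Import reals trigo.
From mathcomp Require Import zify lra.
Set Implicit Arguments. Unset Strict Implicit. Unset Printing Implicit Defensive.
Import Order.TTheory GRing.Theory Num.Theory.
Local Open Scope ring_scope.

(* Since T is a tree, the T-path between two vertices is unique, so the gain of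
   every fundamental cycle is a well-defined unit complex number, which is
   e^{ic} for exactly one c in [0, 2 pi): this gives the covering and the
   disjointness.  For nonemptiness, give gain 1 to the tree edges and e^{ic_j}
   to the non-tree edge of the j-th fundamental cycle, oriented as in G_T; the
   tree order is antisymmetric, so no edge receives two prescriptions. *)

Section AcyclicPaths.
Variables (V : finType) (e : rel V).
Hypotheses (e_sym : symmetric e) (e_acyclic : acyclic e).

Lemma acyclic_two_paths x P Q z :
  path e x (rcons P z) -> path e x (rcons Q z) ->
  uniq (x :: rcons P z) -> uniq (x :: rcons Q z) -> ~~ has (mem Q) P ->
  P = [::] /\ Q = [::].
Proof.
move=> pathP pathQ uniqP uniqQ PQ.
have [|PQ_gt0] := posnP (size P + size Q).
  by move/eqP; rewrite addn_eq0 !size_eq0 => /andP[/eqP-> /eqP->].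
have /negP[] : ~~ cycle e (x :: rcons P z ++ rev Q).
  apply: e_acyclic; first by rewrite /= size_cat size_rcons size_rev; lia.
  rewrite -cat_cons cat_uniq uniqP rev_uniq.
  move: uniqQ; rewrite /= mem_rcons inE negb_or rcons_uniq.
  move=> /andP[/andP[_ xQ] /andP[zQ ->]]; rewrite andbT.
  apply/hasPn => y; rewrite mem_rev => yQ; rewrite inE mem_rcons !inE.
  rewrite (negbTE (memPn xQ y yQ)) (negbTE (memPn zQ y yQ)) /=.
  exact: contraL (hasPn PQ y) yQ.
rewrite /= rcons_cat cat_path pathP last_rcons /=.
rewrite -rev_cons -[z in path _ z](last_rcons x Q) -[x :: Q](belast_rcons x Q z).
by rewrite rev_path (eq_path (e' := e)).
Qed.

Lemma tpath_unique x p q y : tpath e x p y -> tpath e x q y -> p = q.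
Proof.
elim: p x q => [|a p IHp] x [|b q] //.
- by case=> _ /= <- _ [_ /= <- /andP[/negP[]]]; rewrite mem_last.
- case=> _ /= <- /andP[xap _] [_ /= xy].
  by move: xap; rewrite xy mem_last.
move=> [pa la ua] [qb lb ub].
have [eq_ab | ab] := eqVneq a b.
  move: pa ua qb ub; subst b => /= /andP[_ ?] /andP[_ ?] /andP[_ ?] /andP[_ ?].
  by rewrite (IHp a q).
exfalso.
(* Cut both paths at the first vertex [z] of [a :: p] lying on [b :: q]. *)
have ap_bq : has (mem (b :: q)) (a :: p).
  by apply/hasP; exists y; [rewrite -la /= | rewrite -lb /=]; apply: mem_last.
move Eap: (a :: p) ap_bq pa ua => ap ap_bq; move: Eap.
case/split_find: ap_bq => z P P2 zbq PQ Eap pa ua.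
move Ebq: (b :: q) zbq qb ub PQ => bq zbq; move: Ebq.
case/splitPr: zbq => Q Q2 Ebq qb ub PQ.
have [P0 Q0] : P = [::] /\ Q = [::].
  apply: (acyclic_two_paths (x := x) (z := z)).
  - by move: pa; rewrite cat_path => /andP[].
  - by move: qb; rewrite -cat_rcons cat_path => /andP[].
  - by move: ua; rewrite -cat_cons cat_uniq => /andP[].
  - by move: ub; rewrite -cat_rcons -cat_cons cat_uniq => /andP[].
  - by apply: contra PQ; apply: sub_has => u; rewrite !inE mem_cat => ->.
move: Eap Ebq; rewrite P0 Q0 => -[az _] [bz _].
by move: ab; rewrite az bz eqxx.
Qed.

Lemma tree_le_anti root s t : tree_le e root s t -> tree_le e root t s -> s = t.
Proof.
move=> [pt [[pt_path pt_last pt_uniq] s_in]] [ps [ps_tpath t_in]].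
case/splitPl: s_in pt_path pt_last pt_uniq => p1 p2 p1_last.
rewrite cat_path -cat_cons cat_uniq last_cat p1_last => /andP[p1_path _] p2_last.
move=> /and3P[p1_uniq p1_p2 _].
have p1_ps : p1 = ps by apply: tpath_unique ps_tpath.
case: p2 p2_last p1_p2 => [//|u p2] p2_last /hasPn p1_p2.
have /negP[] : t \notin root :: p1 by rewrite p1_p2 // -p2_last /= mem_last.
by rewrite p1_ps.
Qed.

Lemma tpath_exists x y : connect e x y -> exists p, tpath e x p y.
Proof. by case/connectP=> p /shortenP[q q_path q_uniq _] ->; exists q. Qed.
End AcyclicPaths.

Section UnitCircle.
Variable R : realType.
Implicit Types (a b c u : R) (z : R[i]).

Lemma in_IE c : in_I c = (0 <= c < pi *+ 2).
Proof. by rewrite /in_I mulr_natl. Qed.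

Lemma sin_lt0_pi_2pi u : pi < u < pi *+ 2 -> sin u < 0.
Proof.
move=> /andP[pi_u u_2pi]; rewrite -[u](subrK pi) sinDpi oppr_lt0 sin_gt0_pi //.
by rewrite subr_gt0 pi_u ltrBlDr -mulr2n.
Qed.

Lemma norm_expi c : `|expi c| = 1.
Proof. by rewrite normc_def /= cos2Dsin2 sqrtr1. Qed.

Lemma expi_inj : {in @in_I R &, injective (@expi R)}.
Proof.
(* [cos] is injective on [0, pi]; the lower half circle is reflected there by [u |-> 2 pi - u]. *)
have upper_half u : in_I u -> 0 <= sin u -> u \in `[0, pi].
  rewrite in_IE in_itv /= => /andP[-> u_2pi]; apply: contraTT; rewrite -!ltNge => pi_u.
  by rewrite sin_lt0_pi_2pi ?pi_u.
have lower_half u : in_I u -> sin u < 0 -> pi *+ 2 - u \in `[0, pi].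
  rewrite in_IE in_itv /= => /andP[u_ge0 u_2pi] sin_u.
  have pi_u : pi < u.
    by rewrite ltNge; apply: contraTN sin_u => u_pi; rewrite -leNgt sin_ge0_pi ?u_ge0.
  by rewrite subr_ge0 ltW //= lerBlDr mulr2n lerD2l ltW.
have cos_2piB u : cos (pi *+ 2 - u) = cos u by rewrite addrC cosD2pi cosN.
move=> a b aI bI [cos_ab sin_ab].
have [sin_a_ge0 | sin_a_lt0] := leP 0 (sin a).
  by apply: cos_inj; rewrite ?upper_half // -sin_ab.
apply/oppr_inj/(addrI (pi *+ 2))/cos_inj; rewrite ?cos_2piB ?lower_half //.
by rewrite -sin_ab.
Qed.

Lemma expi_onto z : `|z| = 1 -> exists2 c, in_I c & expi c = z.
Proof.
move=> z_1; have := add_Re2_Im2 z; rewrite z_1 expr1n.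
case: z {z_1} => a b /= [ab_1].
have a_11 : -1 <= a <= 1 by apply/andP; split; nra.
have sin_acos_a : sin (acos a) = `|b|.
  by rewrite sin_acos // -ab_1 addrC addKr sqrtr_sqr.
have acos_a_ge0 := acos_ge0 a_11; have acos_a_lepi := acos_lepi a_11.
have [b_ge0 | b_lt0] := leP 0 b.
  exists (acos a); last by rewrite /expi acosK ?in_itv //= sin_acos_a ger0_norm.
  by rewrite in_IE acos_a_ge0 /= (le_lt_trans acos_a_lepi) // mulr2n ltrDl pi_gt0.
exists (pi *+ 2 - acos a).
  rewrite in_IE subr_ge0 ltrBlDr ltrDl acos_gt0 ?(le_trans acos_a_lepi) //=.
    by rewrite mulr2n lerDl pi_ge0.
  by move: a_11 => /andP[-> _]; nra.
rewrite /expi addrC cosD2pi sinD2pi cosN sinN acosK ?in_itv //= sin_acos_a.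
by rewrite ltr0_norm // opprK.
Qed.
End UnitCircle.

Section Gains.
Variables (R : realType) (V : finType).
Implicit Types (phi : V -> V -> R[i]) (e : rel V).

Lemma walk_gain_cons phi x a p :
  walk_gain phi x (a :: p) = phi x a * walk_gain phi a p.
Proof. by rewrite /walk_gain big_cons. Qed.

Lemma walk_gain_ind (P : R[i] -> Prop) e phi x p :
  P 1 -> (forall g h, P g -> P h -> P (g * h)) ->
  (forall u v, e u v -> P (phi u v)) -> path e x p -> P (walk_gain phi x p).
Proof.
move=> P1 PM Pe; elim: p x => [|a p IHp] x /=; first by rewrite /walk_gain big_nil.
by case/andP=> xa ap; rewrite walk_gain_cons; apply: PM; [apply: Pe | apply: IHp].
Qed.

Lemma fund_cycle_gain_tpath tr phi s p t :
  symmetric tr -> acyclic tr -> tpath tr s p t ->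
  fund_cycle_gain tr phi s t (walk_gain phi s p * phi t s).
Proof. by move=> tr_sym tr_acyclic st q /(tpath_unique tr_sym tr_acyclic st) ->. Qed.

Section CotreeGain.
Variables (I : finType) (cyc : I -> V * V) (w : I -> R[i]).

(* The fundamental cycle of [cyc j = (s, t)] runs through the non-tree edge
   as [t -> s], which therefore carries [w j]. *)
Definition cotree_gain (x y : V) : R[i] :=
  if [pick j | cyc j == (y, x)] is Some j then w j
  else if [pick j | cyc j == (x, y)] is Some j then (w j)^-1 else 1.

Lemma cotree_gain_cyc j : injective cyc -> cotree_gain (cyc j).2 (cyc j).1 = w j.
Proof.
move=> cyc_inj; rewrite /cotree_gain -surjective_pairing.
by case: pickP => [i /eqP/cyc_inj-> // | /(_ j)]; rewrite eqxx.
Qed.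

Lemma cotree_gainV s t :
  (forall i j, cyc i != ((cyc j).2, (cyc j).1)) ->
  cotree_gain t s = (cotree_gain s t)^-1.
Proof.
move=> cyc_asym; rewrite /cotree_gain.
case: (pickP (fun j => cyc j == (s, t))) => [i /eqP ci | _];
  case: (pickP (fun j => cyc j == (t, s))) => [j /eqP cj | _];
  rewrite ?invrK ?invr1 //.
by move: (cyc_asym i j); rewrite ci cj eqxx.
Qed.

Lemma norm_cotree_gain s t : (forall j, `|w j| = 1) -> `|cotree_gain s t| = 1.
Proof.
move=> w_norm; rewrite /cotree_gain.
case: (pickP (fun j => cyc j == (t, s))) => [j _ | _]; first exact: w_norm.
case: (pickP (fun j => cyc j == (s, t))) => [j _ | _]; last exact: normr1.
by rewrite normfV w_norm invr1.
Qed.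

Lemma cotree_gain_out s t :
  (forall j, cyc j != (s, t)) -> (forall j, cyc j != (t, s)) -> cotree_gain s t = 1.
Proof.
move=> st_out ts_out; rewrite /cotree_gain.
case: pickP => [j /eqP cj | _]; first by move: (ts_out j); rewrite cj eqxx.
by case: pickP => [j /eqP cj | _] //; move: (st_out j); rewrite cj eqxx.
Qed.
End CotreeGain.
End Gains.

Section FundamentalCycles.
Variables (R : realType) (V : finType) (adj tr : rel V) (root : V).
Variables (k : nat) (cyc : 'I_k -> V * V).
Hypotheses (adj_sym : symmetric adj) (adj_irr : irreflexive adj).
Hypotheses (tr_sym : symmetric tr) (tr_sub : subrel tr adj).
Hypotheses (tr_conn : forall x y, connect tr x y) (tr_acyclic : acyclic tr).
Hypotheses (cyc_inj : injective cyc) (cyc_fund : forall j, fund_edge adj tr root (cyc j)).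

Lemma fund_edge_asym s t :
  fund_edge adj tr root (s, t) -> ~ fund_edge adj tr root (t, s).
Proof.
case=> /= st _ le_st [_ _ /= le_ts].
by move: st; rewrite (tree_le_anti tr_sym tr_acyclic le_st le_ts) adj_irr.
Qed.

Lemma in_A_nonempty (r : {ffun 'I_k -> R}) :
  exists phi, is_gain adj phi /\ in_A tr cyc phi r.
Proof.
have cyc_asym i j : cyc i != ((cyc j).2, (cyc j).1).
  by apply/eqP => cij; apply: (fund_edge_asym (cyc_fund j)); rewrite -cij.
pose phi := cotree_gain cyc (fun j => expi (r j)).
have tree_edge_gain u v : tr u v -> phi u v = 1.
  have tree_edge_out x y j : tr x y -> cyc j != (x, y).
    by move=> xy; apply/eqP => cj; case: (cyc_fund j); rewrite cj /= xy.
  by move=> uv; apply: cotree_gain_out => j; rewrite tree_edge_out // tr_sym.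
have tree_walk_gain x p : path tr x p -> walk_gain phi x p = 1.
  by apply: (walk_gain_ind (P := eq^~ 1)) tree_edge_gain => // g h -> ->; rewrite mulr1.
exists phi; split; [split; [|split] |].
- by move=> s t _; apply: norm_cotree_gain => j; apply: norm_expi.
- by move=> s t _; apply: cotree_gainV.
- move=> s t st; apply: cotree_gain_out => j; apply/eqP => cj; case: (cyc_fund j).
  + by rewrite cj /= (negbTE st).
  + by rewrite cj /= adj_sym (negbTE st).
- by move=> j p [p_path _ _]; rewrite tree_walk_gain // mul1r; apply: cotree_gain_cyc.
Qed.

Lemma in_A_cover phi : is_gain adj phi ->
  exists r : {ffun 'I_k -> R}, (forall j, in_I (r j)) /\ in_A tr cyc phi r.
Proof.
move=> [phi_norm _].
have tree_walk_norm x p : path tr x p -> `|walk_gain phi x p| = 1.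
  apply: (walk_gain_ind (P := fun g => `|g| = 1)) => [|g h|u v /tr_sub]; last exact: phi_norm.
    exact: normr1.
  by rewrite normrM => -> ->; rewrite mulr1.
have arg j : exists2 c, in_I c & fund_cycle_gain tr phi (cyc j).1 (cyc j).2 (expi c).
  have [st _ _] := cyc_fund j; rewrite adj_sym in st.
  have [p p_tpath] := tpath_exists (tr_conn (cyc j).1 (cyc j).2).
  have [|c cI gain_c] := expi_onto (z := walk_gain phi (cyc j).1 p * phi (cyc j).2 (cyc j).1).
    by rewrite normrM phi_norm // mulr1 tree_walk_norm //; case: p_tpath.
  by exists c; rewrite // gain_c; apply: fund_cycle_gain_tpath.
have [c cI c_gain] := fin_all_exists2 arg.
by exists [ffun j => c j]; split=> j; rewrite ffunE.
Qed.

Lemma in_A_disjoint phi (r1 r2 : {ffun 'I_k -> R}) :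
  (forall j, in_I (r1 j)) -> (forall j, in_I (r2 j)) ->
  in_A tr cyc phi r1 -> in_A tr cyc phi r2 -> r1 = r2.
Proof.
move=> r1I r2I r1_gain r2_gain; apply/ffunP => j.
have [p p_tpath] := tpath_exists (tr_conn (cyc j).1 (cyc j).2).
by apply: expi_inj (r1I j) (r2I j) _; rewrite -(r1_gain j p p_tpath) (r2_gain j p p_tpath).
Qed.
End FundamentalCycles.

Theorem theorem3p3 (R : realType) (V : finType) (adj tr : rel V) (root : V)
  (hG : simple_graph adj) (hconn : connected_graph adj)
  (hT : spanning_tree adj tr) (hnormal : normal_tree adj tr root)
  (cyc : 'I_(cyclo_num adj) -> V * V) (cyc_inj : injective cyc)
  (cyc_onto : forall p, fund_edge adj tr root p <-> exists j, cyc j = p) :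
  (* each A_T(r) is nonempty *)
  (forall r : {ffun 'I_(cyclo_num adj) -> R}, (forall j, in_I (r j)) ->
     exists phi : V -> V -> R[i], is_gain adj phi /\ in_A tr cyc phi r) /\
  (* the A_T(r) cover T_G *)
  (forall phi : V -> V -> R[i], is_gain adj phi ->
     exists r : {ffun 'I_(cyclo_num adj) -> R},
       (forall j, in_I (r j)) /\ in_A tr cyc phi r) /\
  (* the A_T(r) are pairwise disjoint *)
  (forall (phi : V -> V -> R[i]) (r1 r2 : {ffun 'I_(cyclo_num adj) -> R}),
     (forall j, in_I (r1 j)) -> (forall j, in_I (r2 j)) ->
     is_gain adj phi -> in_A tr cyc phi r1 -> in_A tr cyc phi r2 -> r1 = r2).
Proof.
(* [hconn], [hnormal] and the onto half of [cyc_onto] only ensure that [cyc]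
   lists all fundamental cycles; the decomposition does not need them. *)
have [adj_sym adj_irr] := hG; have [tr_sym tr_sub tr_conn tr_acyclic] := hT.
have cyc_fund j : fund_edge adj tr root (cyc j) by apply/cyc_onto; exists j.
split; [|split].
- by move=> r _; apply: in_A_nonempty.
- by move=> phi; apply: in_A_cover.
- by move=> phi r1 r2 r1I r2I _; apply: in_A_disjoint.
Qed.
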